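(* Let $\varphi\colon G\to G$ be an endomorphism of a torsion abelian group $G$ and $H\leq G$ a subgroup with $\varphi H\subseteq H$. If the restriction $\varphi|_H\colon H\to H$ and the induced endomorphism $\widetilde\varphi\colon G/H\to G/H$, $\widetilde\varphi(g+H)=\varphi g+H$, are positively expansive, then $\varphi$ is positively expansive. Analogously, if $\varphi$ is an automorphism such that $\varphi|_H$ is an automorphism of $H$, and $\varphi|_H$ and the induced automorphism $\widetilde\varphi$ of $G/H$ are expansive, then $\varphi$ is expansive.
   Context: $\mathbb N=\{0,1,2,\dots\}$. An endomorphism $\varphi$ of an abelian group $G$ is positively expansive if there is a finite subgroup $S\leq G$ such that for every finite subgroup $F\leq G$ there is $n\in\mathbb N$ with $F\subseteq\sum_{k=0}^n\varphi^kS$. An automorphism $\varphi$ is expansive if there is a finite subgroup $S\leq G$ such that for every finite subgroup $F\leq G$ there is $n\in\mathbb N$ with $F\subseteq\sum_{|k|\leq n}\varphi^kS$. *)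

From HB Require Import structures.
From mathcomp Require Import all_boot all_order all_algebra.
Set Implicit Arguments. Unset Strict Implicit. Unset Printing Implicit Defensive.
Import Order.TTheory GRing.Theory.
Local Open Scope ring_scope.

Definition is_subgroup (G : zmodType) (S : G -> Prop) : Prop :=
  S 0 /\ (forall x y, S x -> S y -> S (x - y)).

Definition is_finite_set (G : zmodType) (S : G -> Prop) : Prop :=
  exists s : seq G, forall x, S x -> x \in s.

Definition finite_subgroup (G : zmodType) (S : G -> Prop) : Prop :=
  is_subgroup S /\ is_finite_set S.

Definition subset_of (G : zmodType) (A B : G -> Prop) : Prop :=
  forall x, A x -> B x.

Definition pos_orbit_sum (G : zmodType) (f : G -> G) (S : G -> Prop) (n : nat)
  : G -> Prop :=
  fun x => exists s : nat -> G, (forall k, S (s k)) /\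
           x = \sum_(k < n.+1) iter k f (s k).

(* sum_{|k|<=n} f^k S, where f^(-k) = finv^k for the inverse finv of f *)
Definition orbit_sum (G : zmodType) (f finv : G -> G) (S : G -> Prop) (n : nat)
  : G -> Prop :=
  fun x => exists s t : nat -> G, (forall k, S (s k)) /\ (forall k, S (t k)) /\
           x = \sum_(k < n.+1) iter k f (s k) + \sum_(k < n) iter k.+1 finv (t k).

(* Positive expansivity of the endomorphism f restricted to the (f-invariant)
   subgroup H of G: finite subgroups of H are exactly the finite subgroups of G
   contained in H. *)
Definition pos_expansive_on (G : zmodType) (H : G -> Prop) (f : G -> G) : Prop :=
  exists S, finite_subgroup S /\ subset_of S H /\
    forall F, finite_subgroup F -> subset_of F H ->
      exists n : nat, subset_of F (pos_orbit_sum f S n).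

Definition pos_expansive (G : zmodType) (f : G -> G) : Prop :=
  pos_expansive_on (fun _ => True) f.

Definition expansive_on (G : zmodType) (H : G -> Prop) (f finv : G -> G) : Prop :=
  exists S, finite_subgroup S /\ subset_of S H /\
    forall F, finite_subgroup F -> subset_of F H ->
      exists n : nat, subset_of F (orbit_sum f finv S n).

Definition expansive (G : zmodType) (f finv : G -> G) : Prop :=
  expansive_on (fun _ => True) f finv.

Definition torsion (G : zmodType) : Prop :=
  forall x : G, exists n : nat, (0 < n)%N /\ x *+ n = 0.

(* pi : G -> Q presents Q as the quotient G/H: pi is a surjective additive map
   whose kernel is exactly H. *)
Definition is_quotient_map (G Q : zmodType) (H : G -> Prop) (pi : G -> Q) : Prop :=
  (forall q : Q, exists g, pi g = q) /\ (forall g, pi g = 0 <-> H g).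

(* Choose finite subgroups S_H <= H and S_Q <= G/H witnessing the expansivity of the
   restriction and of the induced map, and lift S_Q to a finite set L in G.  As G is
   torsion, S_H and L generate a finite subgroup S.  For a finite subgroup F of G, the
   image of F in G/H lies in some sum of the phit^k S_Q, so every x in F is congruent
   modulo H to some y_x in the corresponding sum of the phi^k L.  The finitely many
   differences x - y_x generate a finite subgroup of H, which lies in a sum of the
   phi^k S_H; hence F lies in a sum of the phi^k S.  Two-sided orbit sums are one-sided
   sums for the interleaved family phi^0, phi^-1, phi^1, phi^-2, ..., so the same
   argument covers automorphisms. *)

From Stdlib Require Import ClassicalEpsilon.
From mathcomp Require Import all_boot all_order all_algebra.
Import GRing.Theory.
Local Open Scope ring_scope.
Set Implicit Arguments. Unset Strict Implicit.

Lemma choice_on (A B : Type) (P : A -> Prop) (R : A -> B -> Prop) :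
  inhabited B -> (forall x, P x -> exists y, R x y) ->
  exists f : A -> B, forall x, P x -> R x (f x).
Proof.
move=> [b] hR; apply: (choice (fun x y => P x -> R x y)) => x.
by case: (excluded_middle_informative (P x)) => [/hR [y Ry] | nPx]; [exists y | exists b].
Qed.

Lemma iter_morph (T : Type) (f : T -> T) (op : T -> T -> T) :
  {morph f : x y / op x y} -> forall n, {morph iter n f : x y / op x y}.
Proof. by move=> fM; elim=> // n IH x y; rewrite !iterS IH fM. Qed.

Lemma iter_commute (T U : Type) (h : T -> U) (f : T -> T) (g : U -> U) :
  (forall x, h (f x) = g (h x)) -> forall n x, h (iter n f x) = iter n g (h x).
Proof. by move=> hf; elim=> //= n IH x; rewrite hf IH. Qed.

Definition image_set (T U : Type) (f : T -> U) (A : T -> Prop) : U -> Prop :=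
  fun y => exists x, A x /\ f x = y.

Section Subgroups.
Variable G : zmodType.
Implicit Types (A B K : G -> Prop) (l : seq G).

Lemma subgroupN K x : is_subgroup K -> K x -> K (- x).
Proof. by move=> [K0 KB] Kx; rewrite -sub0r; apply: KB. Qed.

Lemma subgroupD K x y : is_subgroup K -> K x -> K y -> K (x + y).
Proof.
by move=> sK Kx Ky; rewrite -[y]opprK; apply: (proj2 sK) => //; apply: subgroupN.
Qed.

Lemma finite_subset A B : subset_of A B -> is_finite_set B -> is_finite_set A.
Proof. by move=> AB [l Bl]; exists l => x /AB /Bl. Qed.

Lemma finite_setU A B :
  is_finite_set A -> is_finite_set B -> is_finite_set (fun x => A x \/ B x).
Proof.
move=> [la Al] [lb Bl]; exists (la ++ lb).
by move=> x [/Al | /Bl] x_l; rewrite mem_cat x_l ?orbT.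
Qed.

Fixpoint nat_span l : G -> Prop :=
  match l with
  | [::] => fun x => x = 0
  | a :: l' => fun x => exists j : nat, exists y, nat_span l' y /\ x = a *+ j + y
  end.

Lemma nat_span0 l : nat_span l 0.
Proof. by elim: l => [|a l IH] //=; exists 0%N, 0; rewrite mulr0n addr0. Qed.

Lemma mem_nat_span l x : x \in l -> nat_span l x.
Proof.
elim: l => [|a l IH] //; rewrite inE => /orP [/eqP -> | x_l].
  by exists 1%N, 0; rewrite addr0; split; first exact: nat_span0.
by exists 0%N, x; rewrite mulr0n add0r; split; first exact: IH.
Qed.

Definition generated A : G -> Prop :=
  fun x => forall K, is_subgroup K -> subset_of A K -> K x.

Lemma generated_subgroup A : is_subgroup (generated A).
Proof.
split=> [K [K0 _] _ // | x y Ax Ay K sK AK].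
exact: (proj2 sK) (Ax K sK AK) (Ay K sK AK).
Qed.

Lemma sub_generated A : subset_of A (generated A).
Proof. by move=> x Ax K _; apply. Qed.

Lemma generated_min A K : is_subgroup K -> subset_of A K -> subset_of (generated A) K.
Proof. by move=> sK AK x; apply. Qed.

Hypothesis tG : torsion G.

Lemma nat_span_subgroup l : is_subgroup (nat_span l).
Proof.
split; first exact: nat_span0.
elim: l => [|a l IH] /=; first by move=> x y -> ->; rewrite subr0.
move=> _ _ [i [x [Sx ->]]] [j [y [Sy ->]]].
have [n [n_gt0 an]] := tG a.
have a_opp : a *+ n.-1 = - a by apply: (addIr a); rewrite addNr -mulrSr prednK.
exists (i + n.-1 * j)%N, (x - y); split; first exact: IH.
by rewrite mulrnDr mulrnA a_opp mulNrn opprD addrACA.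
Qed.

(* Coefficients of a generator [a] only matter modulo the order of [a]. *)
Lemma nat_span_finite l : is_finite_set (nat_span l).
Proof.
elim: l => [|a l [L SL]] /=; first by exists [:: 0] => x ->; rewrite inE.
have [n [n_gt0 an]] := tG a.
exists [seq a *+ i + y | i <- iota 0 n, y <- L] => _ [j [y [Sy ->]]].
rewrite {1}(divn_eq j n) mulrnDr mulnC mulrnA an mul0rn add0r.
by apply: allpairs_f; [rewrite mem_iota ltn_mod n_gt0 | exact: SL].
Qed.

Lemma generated_finite A : is_finite_set A -> finite_subgroup (generated A).
Proof.
move=> [l Al]; split; first exact: generated_subgroup.
apply: (finite_subset _ (nat_span_finite l)).
by apply: generated_min (nat_span_subgroup l) _ => y /Al; apply: mem_nat_span.
Qed.

End Subgroups.

Section Images.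
Variables G Q : zmodType.
Implicit Type A : G -> Prop.

Lemma finite_image (f : G -> Q) A :
  is_finite_set A -> is_finite_set (image_set f A).
Proof. by move=> [l Al]; exists (map f l) => _ [x [/Al x_l <-]]; apply: map_f. Qed.

Lemma subgroup_image (pi : {additive G -> Q}) A :
  is_subgroup A -> is_subgroup (image_set pi A).
Proof.
move=> [A0 AB]; split; first by exists 0; rewrite raddf0.
move=> _ _ [x [Ax <-]] [y [Ay <-]].
by exists (x - y); rewrite raddfB; split; first exact: AB.
Qed.

End Images.

Lemma finite_set_lift (G Q : zmodType) (pi : G -> Q) (SQ : Q -> Prop) :
  (forall q, exists g, pi g = q) -> is_finite_set SQ ->
  exists L, is_finite_set L /\ subset_of SQ (image_set pi L).
Proof.
move=> pi_surj finSQ; have [sigma pi_sigma] := choice _ pi_surj.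
exists (image_set sigma SQ); split; first exact: finite_image.
by move=> q SQq; exists (sigma q); split; [exists q | apply: pi_sigma].
Qed.

Definition family_sum (G : zmodType) (fs : nat -> G -> G) (S : G -> Prop) (N : nat) :
    G -> Prop :=
  fun x => exists s : nat -> G, (forall k, S (s k)) /\ x = \sum_(k < N) fs k (s k).

Section FamilySum.
Variables (G : zmodType) (fs : nat -> G -> G).
Implicit Types (S : G -> Prop) (N : nat).

Lemma family_sum_subset S S' N :
  subset_of S S' -> subset_of (family_sum fs S N) (family_sum fs S' N).
Proof. by move=> SS' _ [s [Ss ->]]; exists s; split=> // k; apply: SS'. Qed.

Lemma family_sum_image (Q : zmodType) (pi : {additive G -> Q}) (fsQ : nat -> Q -> Q)
    (SQ : Q -> Prop) (L : G -> Prop) N :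
  (forall k g, pi (fs k g) = fsQ k (pi g)) -> subset_of SQ (image_set pi L) ->
  subset_of (family_sum fsQ SQ N) (image_set pi (family_sum fs L N)).
Proof.
move=> pi_fs SQ_L _ [s [Ss ->]].
have [t Lt] := choice_on (inhabits 0) SQ_L.
exists (\sum_(k < N) fs k (t (s k))); split.
  by exists (t \o s); split=> // k; case: (Lt _ (Ss k)).
by rewrite raddf_sum; apply: eq_bigr => k _; rewrite pi_fs; case: (Lt _ (Ss k)) => _ ->.
Qed.

Hypothesis fs_morphD : forall k, {morph fs k : a b / a + b}.

Lemma family_sum_widen S N M :
  S 0 -> (N <= M)%N -> subset_of (family_sum fs S N) (family_sum fs S M).
Proof.
move=> S0 NM _ [s [Ss ->]].
have fs0 k : fs k 0 = 0 by apply: (addrI (fs k 0)); rewrite -fs_morphD !addr0.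
exists (fun k => if (k < N)%N then s k else 0); split; first by move=> k; case: ifP.
rewrite (big_ord_widen _ (fun k => fs k (s k)) NM) big_mkcond /=.
by apply: eq_bigr => k _; case: ifP; rewrite ?fs0.
Qed.

Lemma family_sumD S N x y :
  (forall a b, S a -> S b -> S (a + b)) ->
  family_sum fs S N x -> family_sum fs S N y -> family_sum fs S N (x + y).
Proof.
move=> SD [s [Ss ->]] [t [St ->]]; exists (fun k => s k + t k).
split=> [k | ]; first exact: SD.
by rewrite -big_split; apply: eq_bigr => k _; rewrite fs_morphD.
Qed.

End FamilySum.

Definition interleave (T : Type) (f g : nat -> T) : nat -> T :=
  fun k => if odd k then g k./2 else f k./2.

Lemma sum_interleave (G : zmodType) (fs gs : nat -> G -> G) (u : nat -> G) n :
  \sum_(k < n.*2.+1) interleave fs gs k (u k)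
  = \sum_(k < n.+1) fs k (u k.*2) + \sum_(k < n) gs k (u k.*2.+1).
Proof.
elim: n => [|n IH]; first by rewrite !big_ord1 big_ord0 addr0.
rewrite doubleS big_ord_recr [in LHS]big_ord_recr /= IH.
rewrite [X in _ = X + _]big_ord_recr [X in _ = _ + X]big_ord_recr /=.
rewrite /interleave /= odd_double /= uphalf_double doubleK doubleS.
by rewrite -addrA [_ + fs _ _]addrC addrACA.
Qed.

Lemma orbit_sum_interleave (G : zmodType) (f finv : G -> G) (S : G -> Prop) n x :
  orbit_sum f finv S n x
  <-> family_sum (interleave (fun k => iter k f) (fun k => iter k.+1 finv)) S n.*2.+1 x.
Proof.
rewrite /family_sum; split=> [[s [t [Ss [St ->]]]] | [u [Su ->]]].
  exists (interleave s t); split; first by move=> k; rewrite /interleave; case: odd.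
  rewrite sum_interleave /interleave.
  by congr (_ + _); apply: eq_bigr => k _; rewrite /= odd_double ?doubleK ?uphalf_double.
exists (fun k => u k.*2), (fun k => u k.*2.+1); do 2 split => //.
by rewrite sum_interleave.
Qed.

(* [pos_expansive_on H f] is convertible to
   [expansive_for (fun S n => family_sum (fun k => iter k f) S n.+1) H]. *)
Definition expansive_for (G : zmodType) (O : (G -> Prop) -> nat -> G -> Prop)
    (H : G -> Prop) : Prop :=
  exists S, finite_subgroup S /\ subset_of S H /\
    forall F, finite_subgroup F -> subset_of F H -> exists n, subset_of F (O S n).

Lemma expansive_for_ext (G : zmodType) (O O' : (G -> Prop) -> nat -> G -> Prop) H :
  (forall S n x, O S n x <-> O' S n x) -> expansive_for O H -> expansive_for O' H.
Proof.
move=> OO' [S [finS [SH coverS]]]; exists S; do 2 split => //.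
by move=> F finF FH; have [n FO] := coverS F finF FH; exists n => x /FO /OO'.
Qed.

Section Extension.
Variables (G Q : zmodType) (pi : {additive G -> Q}) (H : G -> Prop).
Variables (fs : nat -> G -> G) (fsQ : nat -> Q -> Q) (len : nat -> nat).
Hypotheses (tG : torsion G) (sH : is_subgroup H) (piH : is_quotient_map H pi).
Hypothesis fs_morphD : forall k, {morph fs k : a b / a + b}.
Hypothesis pi_fs : forall k g, pi (fs k g) = fsQ k (pi g).
Hypothesis len_homo : {homo len : m n / (m <= n)%N}.

Lemma expansive_for_extension :
  expansive_for (fun S n => family_sum fs S (len n)) H ->
  expansive_for (fun S n => family_sum fsQ S (len n)) (fun _ => True) ->
  expansive_for (fun S n => family_sum fs S (len n)) (fun _ => True).
Proof.
move=> [SH [[_ finSH] [_ coverH]]] [SQ [[_ finSQ] [_ coverQ]]].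
have [L [finL SQ_L]] := finite_set_lift piH.1 finSQ.
pose S := generated (fun g => SH g \/ L g).
have [sS finS] := generated_finite tG (finite_setU finSH finL).
exists S; do 2 split => //; move=> F [sF finF] _.
have [n FQ_n] := coverQ (image_set pi F)
  (conj (subgroup_image pi sF) (finite_image pi finF)) (fun _ _ => I).
have lift_F x : F x -> exists y, family_sum fs L (len n) y /\ pi y = pi x.
  by move=> Fx; apply: (family_sum_image pi_fs SQ_L); apply: FQ_n; exists x.
have [c Fc] := choice_on (inhabits 0) lift_F.
pose D := image_set (fun x => x - c x) F.
have DH : subset_of D H.
  by move=> _ [x [Fx <-]]; apply/piH.2; rewrite raddfB (Fc x Fx).2 subrr.
have [m D_m] := coverH (generated D) (generated_finite tG (finite_image _ finF))
  (generated_min sH DH).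
have S0 : S 0 := sS.1.
exists (maxn n m) => x Fx; rewrite -(subrK (c x) x).
apply: family_sumD => //; first by move=> a b; apply: subgroupD.
- apply: (family_sum_widen fs_morphD S0 (len_homo (leq_maxr n m))).
  apply: (family_sum_subset (S := SH)) => [g SHg | ]; first by apply: sub_generated; left.
  by apply: D_m; apply: sub_generated; exists x.
- apply: (family_sum_widen fs_morphD S0 (len_homo (leq_maxl n m))).
  apply: (family_sum_subset (S := L)) => [g Lg | ]; first by apply: sub_generated; right.
  exact: (Fc x Fx).1.
Qed.

End Extension.

Lemma pos_expansive_extension (G Q : zmodType) (phi : {additive G -> G}) (H : G -> Prop)
    (pi : {additive G -> Q}) (phit : Q -> Q) :
  torsion G -> is_subgroup H -> is_quotient_map H pi ->
  (forall g, phit (pi g) = pi (phi g)) ->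
  pos_expansive_on H phi -> pos_expansive phit -> pos_expansive phi.
Proof.
move=> tG sH piH pi_phi.
apply: (expansive_for_extension (fs := fun k => iter k phi) (fsQ := fun k => iter k phit)
  (len := succn) tG sH piH) => [k | k g | m n].
- exact: iter_morph (raddfD phi) k.
- by apply: iter_commute => x; rewrite pi_phi.
- by rewrite ltnS.
Qed.

Lemma expansive_extension (G Q : zmodType) (phi : {additive G -> G}) (phiinv : G -> G)
    (H : G -> Prop) (pi : {additive G -> Q}) (phit phitinv : Q -> Q) :
  torsion G -> is_subgroup H -> cancel phi phiinv -> cancel phiinv phi ->
  is_quotient_map H pi -> (forall g, phit (pi g) = pi (phi g)) -> cancel phit phitinv ->
  expansive_on H phi phiinv -> expansive phit phitinv -> expansive phi phiinv.
Proof.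
move=> tG sH phiK phiinvK piH pi_phi phitK.
have phiinvD : {morph phiinv : a b / a + b}.
  by move=> a b; rewrite -{1}(phiinvK a) -{1}(phiinvK b) -raddfD phiK.
have pi_phiinv g : pi (phiinv g) = phitinv (pi g).
  by rewrite -{2}(phiinvK g) -pi_phi phitK.
move=> /(expansive_for_ext (@orbit_sum_interleave _ _ _)) expH.
move=> /(expansive_for_ext (@orbit_sum_interleave _ _ _)) expQ.
apply: (expansive_for_ext (fun S n x => iff_sym (orbit_sum_interleave _ _ S n x))).
apply: (expansive_for_extension (len := fun n => n.*2.+1) tG sH piH _ _ _ expH expQ).
- by move=> k; rewrite /interleave; case: odd; apply: iter_morph => // a b; apply: raddfD.
- by move=> k g; rewrite /interleave; case: odd; apply: iter_commute => x; rewrite ?pi_phi.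
- by move=> m n; rewrite ltnS leq_double.
Qed.

Theorem proposition2p9 :
  (forall (G : zmodType) (phi : {additive G -> G}) (H : G -> Prop)
          (Q : zmodType) (pi : {additive G -> Q}) (phit : Q -> Q),
      torsion G -> is_subgroup H ->
      (forall g, H g -> H (phi g)) ->
      is_quotient_map H pi ->
      (forall g, phit (pi g) = pi (phi g)) ->
      pos_expansive_on H phi -> pos_expansive phit ->
      pos_expansive phi)
  /\
  (forall (G : zmodType) (phi : {additive G -> G}) (phiinv : G -> G)
          (H : G -> Prop)
          (Q : zmodType) (pi : {additive G -> Q}) (phit phitinv : Q -> Q),
      torsion G -> is_subgroup H ->
      cancel phi phiinv -> cancel phiinv phi ->
      (forall g, H g -> H (phi g)) ->
      (forall g, H g -> H (phiinv g)) ->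
      is_quotient_map H pi ->
      (forall g, phit (pi g) = pi (phi g)) ->
      cancel phit phitinv -> cancel phitinv phit ->
      expansive_on H phi phiinv -> expansive phit phitinv ->
      expansive phi phiinv).
Proof.
(* The invariance of H under phi and phiinv follows from the compatibility with pi. *)
split=> [G phi H Q pi phit tG sH _ |
         G phi phiinv H Q pi phit phitinv tG sH phiK phiinvK _ _].
  exact: pos_expansive_extension.
by move=> piH pi_phi phitK _; apply: expansive_extension phiK phiinvK piH pi_phi phitK.
Qed.
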